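(* Let $g$ solve system (S3) with initial data $h_{ii}>0$ satisfying either $h_{11}=h_{22}<h_{33}$, or $h_{11}<h_{22}=h_{33}<4h_{11}$. Then the solution exists for all $t\ge0$, and, with $\kappa = (4\det h - h_{00}h_{22}^3)\,h_{00}^3h_{22}$: (i) $(4\det h - g_{00}g_{22}^3)\,g_{00}^3g_{22} = \kappa$ for all $t$; (ii) $g_{00}\to (\kappa/3)^{3/8}(\det h)^{-1/2}$ and $g_{11},g_{22},g_{33}\to (3/\kappa)^{1/8}(\det h)^{1/2}$ as $t\to\infty$; (iii) if $h_{11}=h_{22}$, then $g_{11}$ and $g_{22}$ are increasing and $g_{33}$ is decreasing; (iv) if $h_{22}=h_{33}$, then $g_{11}$ is increasing.
   Context: Let $\det h = h_{00}h_{11}h_{22}h_{33}$, $\beta=\frac{1}{6(\det h)^2}$, and $p(x,y,z) = x^4 - x^3(y+z) + x^2yz + x(-y^3+y^2z+yz^2-z^3) + y^4 - y^3z - yz^3 + z^4$, $q(x,y,z) = 5x^4 - 3x^3(y+z) + x^2yz + x(y^3-y^2z-yz^2+z^3) - 3y^4 + 3y^3z + 3yz^3 - 3z^4$. System (S3): $\dot g_{00} = -\beta\,p(g_{11},g_{22},g_{33})\,g_{00}^3$, $\dot g_{11} = -\beta\,q(g_{11},g_{22},g_{33})\,g_{00}^2g_{11}$, $\dot g_{22} = -\beta\,q(g_{22},g_{33},g_{11})\,g_{00}^2g_{22}$, $\dot g_{33} = -\beta\,q(g_{33},g_{11},g_{22})\,g_{00}^2g_{33}$, $g_{ii}(0)=h_{ii}$.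 This is Bach flow $\partial_tg=B$ on $\mathbb{R}\times\mathbb{S}^3$ in a diagonalizing left-invariant frame $\{\partial_0,e_1,e_2,e_3\}$ with $[e_i,e_j]=\sum_k\varepsilon_{ijk}e_k$ and $g=\mathrm{diag}(g_{00},g_{11},g_{22},g_{33})$; along the flow $g_{00}g_{11}g_{22}g_{33}=\det h$. *)

From Stdlib Require Import Reals Lra.
Open Scope R_scope.

Definition p_poly (x y z : R) : R :=
  x^4 - x^3*(y+z) + x^2*y*z + x*(-(y^3) + y^2*z + y*z^2 - z^3)
  + y^4 - y^3*z - y*z^3 + z^4.

Definition q_poly (x y z : R) : R :=
  5*x^4 - 3*x^3*(y+z) + x^2*y*z + x*(y^3 - y^2*z - y*z^2 + z^3)
  - 3*y^4 + 3*y^3*z + 3*y*z^3 - 3*z^4.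

Definition deth (h0 h1 h2 h3 : R) : R := h0*h1*h2*h3.

Definition beta (h0 h1 h2 h3 : R) : R := 1 / (6 * (deth h0 h1 h2 h3)^2).

Definition solves_S3_global (h0 h1 h2 h3 : R) (g0 g1 g2 g3 : R -> R) : Prop :=
  g0 0 = h0 /\ g1 0 = h1 /\ g2 0 = h2 /\ g3 0 = h3 /\
  (forall eps, 0 < eps -> exists delta, 0 < delta /\
     forall t, 0 <= t < delta ->
       Rabs (g0 t - h0) < eps /\ Rabs (g1 t - h1) < eps /\
       Rabs (g2 t - h2) < eps /\ Rabs (g3 t - h3) < eps) /\
  (forall t, 0 < t ->
     let b := beta h0 h1 h2 h3 in
     derivable_pt_lim g0 t (- b * p_poly (g1 t) (g2 t) (g3 t) * (g0 t)^3) /\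
     derivable_pt_lim g1 t (- b * q_poly (g1 t) (g2 t) (g3 t) * (g0 t)^2 * g1 t) /\
     derivable_pt_lim g2 t (- b * q_poly (g2 t) (g3 t) (g1 t) * (g0 t)^2 * g2 t) /\
     derivable_pt_lim g3 t (- b * q_poly (g3 t) (g1 t) (g2 t) * (g0 t)^2 * g3 t)).

Definition cv_infty_to (f : R -> R) (L : R) : Prop :=
  forall eps, 0 < eps -> exists T, forall t, T <= t -> Rabs (f t - L) < eps.

Definition incr_on_nonneg (f : R -> R) : Prop :=
  forall s t, 0 <= s -> s < t -> f s < f t.
Definition decr_on_nonneg (f : R -> R) : Prop :=
  forall s t, 0 <= s -> s < t -> f t < f s.

(* When two of g11, g22, g33 agree initially they agree forever (their difference solves a
   linear ODE), and (S3) reduces to g00, the doubled coordinate A and the remaining one C.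
   Besides det g = det h, the reduced flow conserves kappa = (4 det h - g00 A^3) g00^3 A, so
   the whole state is a function of the ratio r = A / C, which solves r' = (1 - r) Phi(r) with
   Phi > 0 as long as 0 < r < 4. Hence r - 1 keeps its sign and decays exponentially, which
   gives the monotonicity and the limits (read off at r = 1); conversely, solving the scalar
   equation by inverting its time map yields the global solution. *)

From Stdlib Require Import Reals Lra Psatz ClassicalEpsilon Ranalysis5.
From Coquelicot Require Import Coquelicot.
Open Scope R_scope.

(* Stdlib states these for [(f * g)%F] etc.; the pointwise forms let [apply] match goals. *)
Lemma cont_pt_mult f g x :
  continuity_pt f x -> continuity_pt g x -> continuity_pt (fun t => f t * g t) x.
Proof. exact (continuity_pt_mult f g x). Qed.
Lemma cont_pt_plus f g x :
  continuity_pt f x -> continuity_pt g x -> continuity_pt (fun t => f t + g t) x.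
Proof. exact (continuity_pt_plus f g x). Qed.
Lemma cont_pt_minus f g x :
  continuity_pt f x -> continuity_pt g x -> continuity_pt (fun t => f t - g t) x.
Proof. exact (continuity_pt_minus f g x). Qed.
Lemma cont_pt_opp f x : continuity_pt f x -> continuity_pt (fun t => - f t) x.
Proof. exact (continuity_pt_opp f x). Qed.
Lemma cont_pt_const (k x : R) : continuity_pt (fun _ => k) x.
Proof. now apply continuity_pt_const. Qed.
Lemma cont_pt_pow f n x : continuity_pt f x -> continuity_pt (fun t => f t ^ n) x.
Proof.
  intros Hf. apply (continuity_pt_comp f (fun y => y ^ n)); [exact Hf|].
  apply derivable_continuous_pt, derivable_pt_pow.
Qed.
Lemma cont_pt_div f g x :
  continuity_pt f x -> continuity_pt g x -> g x <> 0 -> continuity_pt (fun t => f t / g t) x.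
Proof. exact (continuity_pt_div f g x). Qed.

Ltac cont_pt_auto :=
  repeat first [ apply cont_pt_mult | apply cont_pt_plus | apply cont_pt_minus
               | apply cont_pt_opp | apply cont_pt_pow | apply cont_pt_const
               | apply continuity_pt_id | assumption
               | match goal with H : forall t, continuity_pt ?f t |- continuity_pt ?f _ =>
                   apply H end ].

Lemma continuity_pt_of_ex_derive (f : R -> R) x : ex_derive f x -> continuity_pt f x.
Proof. intros H. apply continuity_pt_filterlim, (ex_derive_continuous f x H). Qed.

Lemma MVT_derivable_pt_lim (f f' : R -> R) a b : a < b ->
  (forall c, a < c < b -> derivable_pt_lim f c (f' c)) ->
  (forall c, a <= c <= b -> continuity_pt f c) ->
  exists c, a < c < b /\ f b - f a = f' c * (b - a).
Proof.
  intros Hab Hd Hc.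
  pose (pr1 := fun c (P : a < c < b) =>
    exist (fun l => derivable_pt_lim f c l) (f' c) (Hd c P) : derivable_pt f c).
  pose (pr2 := fun c (_ : a < c < b) => derivable_pt_id c).
  destruct (MVT f id a b pr1 pr2 Hab Hc) as [c [P HP]].
  { intros c _. apply derivable_continuous_pt, derivable_pt_id. }
  exists c. split; [exact P|].
  unfold pr1 in HP. simpl in HP.
  rewrite (derive_pt_eq_0 id c 1 (pr2 c P) (derivable_pt_lim_id c)) in HP.
  unfold id in HP. lra.
Qed.

Lemma nondecr_of_deriv_nonneg (f f' : R -> R) a b : a <= b ->
  (forall c, a < c < b -> derivable_pt_lim f c (f' c)) ->
  (forall c, a <= c <= b -> continuity_pt f c) ->
  (forall c, a < c < b -> 0 <= f' c) -> f a <= f b.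
Proof.
  intros Hab Hd Hc Hp. destruct (Req_dec a b) as [->|Hne]; [lra|].
  destruct (MVT_derivable_pt_lim f f' a b) as [c [Hc1 Hc2]]; try lra; auto.
  specialize (Hp c Hc1). nra.
Qed.

Lemma incr_of_deriv_pos (f f' : R -> R) a b : a < b ->
  (forall c, a < c < b -> derivable_pt_lim f c (f' c)) ->
  (forall c, a <= c <= b -> continuity_pt f c) ->
  (forall c, a < c < b -> 0 < f' c) -> f a < f b.
Proof.
  intros Hab Hd Hc Hp.
  destruct (MVT_derivable_pt_lim f f' a b) as [c [Hc1 Hc2]]; auto.
  specialize (Hp c Hc1). nra.
Qed.

Definition is_deriv_pos (f f' : R -> R) : Prop :=
  (forall t, continuity_pt f t) /\ (forall t, 0 < t -> derivable_pt_lim f t (f' t)).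

Section DerivPos.

Variables f f' g g' : R -> R.
Hypothesis Hf : is_deriv_pos f f'.

Lemma is_deriv_pos_le a b : 0 <= a <= b ->
  (forall c, a < c < b -> 0 <= f' c) -> f a <= f b.
Proof.
  intros Hab Hp. destruct Hf as [Hc Hd].
  apply (nondecr_of_deriv_nonneg f f'); auto; [lra | intros c Hc'; apply Hd; lra].
Qed.

Lemma is_deriv_pos_lt a b : 0 <= a -> a < b ->
  (forall c, a < c < b -> 0 < f' c) -> f a < f b.
Proof.
  intros Ha Hab Hp. destruct Hf as [Hc Hd].
  apply (incr_of_deriv_pos f f'); auto. intros c Hc'; apply Hd; lra.
Qed.

Lemma is_deriv_pos_eq a b : 0 <= a <= b ->
  (forall c, a < c < b -> f' c = 0) -> f a = f b.
Proof.
  intros Hab Hz. apply Rle_antisym.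
  - apply is_deriv_pos_le; auto. intros c Hc. rewrite Hz; lra.
  - enough (- f a <= - f b) by lra.
    apply (nondecr_of_deriv_nonneg (fun t => - f t) (fun t => - f' t)); try lra.
    + intros c Hc. apply derivable_pt_lim_opp, Hf. lra.
    + intros c _. apply continuity_pt_opp, Hf.
    + intros c Hc. rewrite Hz; lra.
Qed.

Lemma is_deriv_pos_opp : is_deriv_pos (fun t => - f t) (fun t => - f' t).
Proof.
  destruct Hf as [Hc Hd]; split.
  - intros t; apply continuity_pt_opp, Hc.
  - intros t Ht; apply derivable_pt_lim_opp, Hd, Ht.
Qed.

Lemma is_deriv_pos_pow n :
  is_deriv_pos (fun t => f t ^ n) (fun t => INR n * f t ^ pred n * f' t).
Proof.
  destruct Hf as [Hc Hd]. split.
  - intros t. cont_pt_auto.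
  - intros t Ht.
    apply (derivable_pt_lim_comp f (fun y => y ^ n)); [apply Hd, Ht | apply derivable_pt_lim_pow].
Qed.

Hypothesis Hg : is_deriv_pos g g'.

Lemma is_deriv_pos_minus : is_deriv_pos (fun t => f t - g t) (fun t => f' t - g' t).
Proof.
  destruct Hf as [Hfc Hfd], Hg as [Hgc Hgd]. split.
  - intros t. cont_pt_auto.
  - intros t Ht. apply derivable_pt_lim_minus; auto.
Qed.

Lemma is_deriv_pos_mult :
  is_deriv_pos (fun t => f t * g t) (fun t => f' t * g t + f t * g' t).
Proof.
  destruct Hf as [Hfc Hfd], Hg as [Hgc Hgd]. split.
  - intros t. cont_pt_auto.
  - intros t Ht. apply derivable_pt_lim_mult; auto.
Qed.

End DerivPos.

Lemma is_deriv_pos_const k : is_deriv_pos (fun _ => k) (fun _ => 0).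
Proof. split; [intros; apply cont_pt_const | intros; apply derivable_pt_lim_const]. Qed.

Section LinearODE.

Variables y y' Rf : R -> R.
Hypothesis Hy : is_deriv_pos y y'.
Hypothesis Hlin : forall t, 0 < t -> y' t = y t * Rf t.

Lemma linear_ode_sq_exp k :
  is_deriv_pos (fun t => y t ^ 2 * exp (2 * k * t))
               (fun t => 2 * (y t ^ 2 * exp (2 * k * t)) * (Rf t + k)).
Proof.
  destruct Hy as [Hc Hd]. split.
  - intros t. apply cont_pt_mult; [cont_pt_auto|].
    apply (continuity_pt_comp (fun s => 2 * k * s) exp); [cont_pt_auto|].
    apply derivable_continuous_pt, derivable_pt_exp.
  - intros t Ht. apply is_derive_Reals.
    assert (Hyt : is_derive y t (y' t)) by (apply is_derive_Reals, Hd, Ht).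
    auto_derive; [exists (y' t); exact Hyt|].
    replace (Derive (fun x => y x) t) with (y' t) by (symmetry; apply is_derive_unique, Hyt).
    rewrite Hlin by exact Ht. ring.
Qed.

Lemma linear_ode_sq_exp_le k t : 0 <= t -> (forall s, 0 < s < t -> Rf s <= - k) ->
  y t ^ 2 * exp (2 * k * t) <= y 0 ^ 2.
Proof.
  intros Ht Hk.
  enough (y t ^ 2 * exp (2 * k * t) <= y 0 ^ 2 * exp (2 * k * 0)) by
    (rewrite Rmult_0_r, exp_0, Rmult_1_r in H; exact H).
  enough (- (y 0 ^ 2 * exp (2 * k * 0)) <= - (y t ^ 2 * exp (2 * k * t))) by lra.
  apply (is_deriv_pos_le _ _ (is_deriv_pos_opp _ _ (linear_ode_sq_exp k))); [lra|].
  intros s Hs. specialize (Hk s Hs).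
  assert (0 <= y s ^ 2 * exp (2 * k * s)) by (apply Rmult_le_pos; [nra | apply Rlt_le, exp_pos]).
  nra.
Qed.

Lemma linear_ode_sq_exp_ge k t : 0 <= t -> (forall s, 0 < s < t -> - k <= Rf s) ->
  y 0 ^ 2 <= y t ^ 2 * exp (2 * k * t).
Proof.
  intros Ht Hk.
  enough (y 0 ^ 2 * exp (2 * k * 0) <= y t ^ 2 * exp (2 * k * t)) by
    (rewrite Rmult_0_r, exp_0, Rmult_1_r in H; exact H).
  apply (is_deriv_pos_le _ _ (linear_ode_sq_exp k)); [lra|].
  intros s Hs. specialize (Hk s Hs).
  assert (0 <= y s ^ 2 * exp (2 * k * s)) by (apply Rmult_le_pos; [nra | apply Rlt_le, exp_pos]).
  nra.
Qed.

Hypothesis HRf : forall t, continuity_pt Rf t.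

(* Gronwall: [y(0)^2 exp(-2Mt) <= y(t)^2 <= y(0)^2 exp(2Mt)] with [M] a bound of [|Rf|] on [0, t]. *)
Lemma linear_ode_sign t : 0 <= t -> (y 0 = 0 -> y t = 0) /\ (0 < y 0 -> 0 < y t).
Proof.
  intros Ht.
  destruct (continuity_ab_maj (fun s => Rabs (Rf s)) 0 t Ht) as [m [Hm _]].
  { intros c _. apply (continuity_pt_comp Rf Rabs); auto. apply Rcontinuity_abs. }
  set (M := Rabs (Rf m)).
  assert (HM : forall s, 0 <= s <= t -> - M <= Rf s <= M).
  { intros s Hs. apply Rabs_le_between, Hm, Hs. }
  split.
  - intros H0. pose proof (linear_ode_sq_exp_le (- M) t Ht) as Hle.
    rewrite H0 in Hle. assert (0 < exp (2 * - M * t)) by apply exp_pos.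
    enough (y t ^ 2 = 0) by nra.
    assert (y t ^ 2 * exp (2 * - M * t) <= 0 ^ 2) by (apply Hle; intros s Hs; specialize (HM s); lra).
    nra.
  - intros H0. destruct (Rlt_or_le 0 (y t)) as [|Hn]; auto. exfalso.
    destruct (IVT_cor y 0 t) as [z [Hz Hyz]]; [exact (proj1 Hy) | exact Ht | nra |].
    pose proof (linear_ode_sq_exp_ge M z (proj1 Hz)) as Hge.
    rewrite Hyz in Hge.
    assert (y 0 ^ 2 <= 0 ^ 2 * exp (2 * M * z)) by (apply Hge; intros s Hs; specialize (HM s); lra).
    nra.
Qed.

End LinearODE.

(* Extension by a constant to negative times, so that right-continuity at 0 becomes continuity. *)
Definition extend0 (f : R -> R) (t : R) : R := f (Rmax 0 t).

Lemma extend0_eq f t : 0 <= t -> extend0 f t = f t.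
Proof. intros. unfold extend0. rewrite Rmax_right; auto. Qed.

Lemma extend0_Rmax f t : extend0 f t = extend0 f (Rmax 0 t).
Proof. unfold extend0. rewrite (Rmax_right 0 (Rmax 0 t)); [reflexivity | apply Rmax_l]. Qed.

Lemma extend0_derivable_pt_lim f t l : 0 < t ->
  derivable_pt_lim f t l -> derivable_pt_lim (extend0 f) t l.
Proof.
  intros Ht Hd. apply is_derive_Reals. apply is_derive_Reals in Hd.
  apply (is_derive_ext_loc f); auto.
  apply (locally_interval _ t 0 p_infty); simpl; auto.
  intros y Hy _. apply eq_sym, extend0_eq. lra.
Qed.

Definition right_cont0 (f : R -> R) : Prop :=
  forall eps, 0 < eps -> exists delta, 0 < delta /\
    forall t, 0 <= t < delta -> Rabs (f t - f 0) < eps.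

Lemma extend0_continuity_pt f : right_cont0 f ->
  (forall t, 0 < t -> continuity_pt f t) -> forall t, continuity_pt (extend0 f) t.
Proof.
  intros Hr Hc t.
  destruct (Rlt_or_le 0 t) as [Ht|Ht]; [|destruct (Rlt_or_le t 0) as [Ht'|Ht']].
  - apply continuity_pt_filterlim, (continuous_ext_loc _ f).
    + apply (locally_interval _ t 0 p_infty); simpl; auto.
      intros y Hy _. apply eq_sym, extend0_eq. lra.
    + apply continuity_pt_filterlim, Hc, Ht.
  - apply continuity_pt_filterlim, (continuous_ext_loc _ (fun _ => f 0)).
    + apply (locally_interval _ t m_infty 0); simpl; auto.
      intros y _ Hy. unfold extend0. rewrite Rmax_left; lra.
    + apply continuous_const.
  - replace t with 0 by lra.
    intros eps Heps. destruct (Hr eps Heps) as [d [Hd0 Hd]].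
    exists d. split; auto. intros x [_ Hx]. simpl in *. unfold R_dist in *.
    unfold extend0. rewrite (Rmax_left 0 0) by lra.
    destruct (Rle_dec 0 x).
    + rewrite Rmax_right by lra. apply Hd. split; auto.
      rewrite Rminus_0_r in Hx. apply Rabs_def2 in Hx. lra.
    + rewrite Rmax_left by lra. rewrite Rminus_diag, Rabs_R0. lra.
Qed.

Lemma extend0_is_deriv_pos f f' : right_cont0 f ->
  (forall t, 0 < t -> derivable_pt_lim f t (f' t)) -> is_deriv_pos (extend0 f) f'.
Proof.
  intros Hr Hd. split.
  - apply extend0_continuity_pt; [exact Hr|].
    intros t Ht. apply derivable_continuous_pt. exists (f' t). apply Hd, Ht.
  - intros t Ht. apply extend0_derivable_pt_lim, Hd; exact Ht.
Qed.

Lemma right_cont0_of_continuity_pt f : continuity_pt f 0 -> right_cont0 f.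
Proof.
  intros Hc eps Heps. destruct (Hc eps Heps) as [d [Hd Hd']].
  exists d. split; auto. intros t Ht.
  destruct (Req_dec t 0) as [->|Ht0]; [rewrite Rminus_diag, Rabs_R0; lra|].
  apply (Hd' t). split; [split; [exact I | auto] |].
  simpl. unfold R_dist. rewrite Rminus_0_r, Rabs_right; lra.
Qed.

(* The autonomous equation [x' = (1 - x) Phi(x)] is solved by inverting the time map
   [G(x) = RInt 1/((1 - s) Phi(s)) from x0 to x], which tends to +oo as x -> 1. *)
Section ScalarODE.

Variables (Phi : R -> R) (lo x0 : R).
Hypothesis Hx0 : lo < x0 < 1.
Hypothesis HPhi : forall x, lo < x <= 1 -> continuity_pt Phi x /\ 0 < Phi x.

Let f (x : R) : R := 1 / ((1 - x) * Phi x).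
Let G (x : R) : R := RInt f x0 x.

Lemma time_density_cont_pos x : lo < x < 1 -> continuity_pt f x /\ 0 < f x.
Proof.
  intros Hx. destruct (HPhi x ltac:(lra)) as [Hc Hp]. split.
  - unfold f. apply cont_pt_div; [apply cont_pt_const | cont_pt_auto |].
    apply Rgt_not_eq, Rmult_lt_0_compat; lra.
  - apply Rdiv_lt_0_compat; [lra | apply Rmult_lt_0_compat; lra].
Qed.

Lemma time_map_deriv x : lo < x < 1 -> derivable_pt_lim G x (f x).
Proof.
  intros Hx. apply is_derive_Reals, is_derive_RInt with x0.
  - apply (locally_interval _ x lo 1); simpl; try lra.
    intros b Hb1 Hb2. apply (RInt_correct (V := R_CompleteNormedModule)).
    apply (ex_RInt_continuous (V := R_CompleteNormedModule)). intros z Hz.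
    apply continuity_pt_filterlim, time_density_cont_pos. split.
    + apply Rlt_le_trans with (Rmin x0 b); [apply Rmin_glb_lt; lra | lra].
    + apply Rle_lt_trans with (Rmax x0 b); [lra | apply Rmax_lub_lt; lra].
  - apply continuity_pt_filterlim, time_density_cont_pos, Hx.
Qed.

Lemma time_map_continuity_pt x : lo < x < 1 -> continuity_pt G x.
Proof. intros Hx. apply derivable_continuous_pt. exists (f x). apply time_map_deriv, Hx. Qed.

Lemma time_map_incr x y : lo < x -> x < y -> y < 1 -> G x < G y.
Proof.
  intros Hx Hxy Hy. apply (incr_of_deriv_pos G f); auto.
  - intros c Hc. apply time_map_deriv. lra.
  - intros c Hc. apply time_map_continuity_pt. lra.
  - intros c Hc. apply time_density_cont_pos. lra.
Qed.

Lemma time_map_x0 : G x0 = 0.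
Proof. exact (RInt_point x0 f). Qed.

(* With [K] the maximum of [Phi] on [x0, 1], [G(x) >= (ln(1 - x0) - ln(1 - x)) / K]. *)
Lemma time_map_unbounded t : exists x, x0 <= x < 1 /\ t <= G x.
Proof.
  destruct (continuity_ab_maj Phi x0 1 ltac:(lra)) as [m [Hm Hm1]].
  { intros c Hc. apply HPhi. lra. }
  set (K := Phi m). assert (HK : 0 < K) by (apply HPhi; lra).
  set (H := fun y => G y + ln (1 - y) / K).
  set (x := 1 - (1 - x0) * exp (- K * Rabs t)).
  assert (He : 0 < exp (- K * Rabs t) <= 1).
  { split; [apply exp_pos|]. pose proof (Rabs_pos t).
    destruct (Req_dec (Rabs t) 0) as [E|E]; [rewrite E, Rmult_0_r, exp_0; lra|].
    rewrite <- exp_0. left. apply exp_increasing. nra. }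
  assert (Hx : x0 <= x < 1) by (unfold x; split; nra).
  assert (HH : H x0 <= H x).
  { apply (nondecr_of_deriv_nonneg H (fun y => f y - / (K * (1 - y)))); try lra.
    - intros c Hc. apply is_derive_Reals.
      apply (is_derive_plus G (fun y => ln (1 - y) / K));
        [apply is_derive_Reals, time_map_deriv; lra|].
      auto_derive; [lra|]. field. split; lra.
    - intros c Hc. apply cont_pt_plus; [apply time_map_continuity_pt; lra|].
      apply continuity_pt_of_ex_derive. auto_derive. lra.
    - intros c Hc. unfold f. destruct (HPhi c ltac:(lra)) as [_ Hp].
      assert (Phi c <= K) by (apply Hm; lra).
      enough (/ (K * (1 - c)) <= 1 / ((1 - c) * Phi c)) by lra.
      unfold Rdiv. rewrite Rmult_1_l. apply Rinv_le_contravar;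
        [apply Rmult_lt_0_compat; lra | nra]. }
  exists x. split; [exact Hx|].
  unfold H in HH. rewrite time_map_x0 in HH.
  replace (1 - x) with ((1 - x0) * exp (- K * Rabs t)) in HH by (unfold x; ring).
  rewrite ln_mult, ln_exp in HH by lra.
  assert (t <= Rabs t) by apply Rle_abs.
  assert (E : (ln (1 - x0) + - K * Rabs t) / K = ln (1 - x0) / K - Rabs t) by (field; lra).
  lra.
Qed.

(* Starting below [x0] makes [G xl < 0], so [phi] inverts [G] on a neighbourhood of [[0, +oo)]. *)
Let xl : R := (lo + x0) / 2.

Lemma time_map_onto t : G xl <= t -> exists x, xl <= x < 1 /\ G x = t.
Proof.
  intros Ht. destruct (time_map_unbounded t) as [x1 [Hx1 Ht1]].
  destruct (f_interv_is_interv G xl x1 t) as [x [Hx Hgx]]; [unfold xl; lra | lra | |].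
  - intros x Hx. apply time_map_continuity_pt. unfold xl in *. lra.
  - exists x. split; [lra | exact Hgx].
Qed.

Let phi (t : R) : R := epsilon (inhabits 0) (fun x => xl <= x < 1 /\ G x = t).

Lemma time_inverse_spec t : G xl <= t -> xl <= phi t < 1 /\ G (phi t) = t.
Proof. intros Ht. apply epsilon_spec, time_map_onto, Ht. Qed.

Lemma time_inverse_le s t : G xl <= s -> s <= t -> phi s <= phi t.
Proof.
  intros Hs Hst. destruct (time_inverse_spec s Hs) as [Hs1 Hs2].
  destruct (time_inverse_spec t ltac:(lra)) as [Ht1 Ht2].
  destruct (Rle_or_lt (phi s) (phi t)) as [|Hlt]; auto.
  pose proof (time_map_incr (phi t) (phi s)). unfold xl in *. lra.
Qed.

Lemma time_inverse_continuity_pt t : G xl < t -> continuity_pt phi t.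
Proof.
  intros Ht. set (ub := phi (t + 1)).
  destruct (time_inverse_spec (t + 1) ltac:(lra)) as [Hub HGub]. fold ub in Hub, HGub.
  assert (Hxl : lo < xl) by (unfold xl; lra).
  assert (Hlu : xl < ub).
  { destruct (Rlt_or_le xl ub) as [|Hle]; auto.
    assert (ub = xl) by lra. rewrite H in HGub. lra. }
  apply (continuity_pt_recip_interv G phi xl ub Hlu).
  - intros x y Hx Hxy Hy. apply time_map_incr; lra.
  - intros s Hs _. exact (proj2 (time_inverse_spec s Hs)).
  - intros s Hs Hs'. split; [apply time_inverse_spec; lra|].
    unfold ub. apply time_inverse_le; lra.
  - intros a Ha. apply time_map_continuity_pt. lra.
  - lra.
Qed.

Lemma time_inverse_deriv t : G xl < t ->
  derivable_pt_lim phi t ((1 - phi t) * Phi (phi t)).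
Proof.
  intros Ht. set (lb := (G xl + t) / 2). set (ub := t + 1).
  assert (Hlb : G xl <= lb) by (unfold lb; lra).
  destruct (time_inverse_spec lb Hlb) as [Hphil _].
  destruct (time_inverse_spec ub ltac:(unfold ub; lra)) as [Hphiu _].
  assert (Prf : forall a, phi lb <= a <= phi ub -> derivable_pt G a).
  { intros a Ha. exists (f a). apply time_map_deriv. unfold xl in *. lra. }
  assert (Hmid : phi lb <= phi t <= phi ub).
  { split; apply time_inverse_le; unfold lb, ub in *; lra. }
  assert (Hft : 0 < f (phi t)) by (apply time_density_cont_pos; unfold xl in *; lra).
  assert (Hder : derive_pt G (phi t) (Prf (phi t) Hmid) = f (phi t)).
  { apply derive_pt_eq_0, time_map_deriv. unfold xl in *; lra. }
  pose proof (derivable_pt_lim_recip_interv G phi lb ub t Prf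
    (time_inverse_continuity_pt t Ht) ltac:(unfold lb, ub; lra) ltac:(unfold lb, ub; lra)
    Hmid ltac:(intros s Hs; exact (proj2 (time_inverse_spec s ltac:(lra))))
    ltac:(rewrite Hder; lra)) as Hd.
  rewrite Hder in Hd.
  replace ((1 - phi t) * Phi (phi t)) with (1 / f (phi t)); [exact Hd|].
  destruct (HPhi (phi t) ltac:(unfold xl in *; lra)).
  unfold f. field. split; [lra|]. apply Rgt_not_eq. lra.
Qed.

Lemma one_minus_x_ode_global : exists x : R -> R,
  x 0 = x0 /\
  (forall t, 0 <= t -> x0 <= x t < 1 /\ continuity_pt x t) /\
  (forall t, 0 < t -> derivable_pt_lim x t ((1 - x t) * Phi (x t))).
Proof.
  assert (HGxl : G xl < 0) by (rewrite <- time_map_x0; apply time_map_incr; unfold xl; lra).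
  exists phi. split; [|split].
  - destruct (time_inverse_spec 0 ltac:(lra)) as [Hr HG].
    destruct (Rtotal_order (phi 0) x0) as [Hlt|[Heq|Hgt]]; auto.
    + pose proof (time_map_incr (phi 0) x0). rewrite time_map_x0 in *. unfold xl in *. lra.
    + pose proof (time_map_incr x0 (phi 0)). rewrite time_map_x0 in *. unfold xl in *. lra.
  - intros t Ht. destruct (time_inverse_spec t ltac:(lra)) as [Hr HG].
    split; [split; [|lra] | apply time_inverse_continuity_pt; lra].
    destruct (Rle_or_lt x0 (phi t)) as [|Hlt]; auto.
    pose proof (time_map_incr (phi t) x0). rewrite time_map_x0 in *. unfold xl in *. lra.
  - intros t Ht. apply time_inverse_deriv. lra.
Qed.

End ScalarODE.

(* On the invariant manifold [g0 A^2 C = D], [(4 D - g0 A^3) g0^3 A = kappa] of the reduced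
   flow, [C] is the eighth root of [Kc (4 - r) / r^5] with [r = A / C], [Kc = D^4 / kappa]. *)
Definition C_of_ratio (Kc r : R) : R := exp (ln (Kc * (4 - r) / r ^ 5) / 8).

(* The ratio [r = A / C] obeys [r' = (1 - r) ratio_rate r] along the reduced flow. *)
Definition ratio_rate (b D Kc r : R) : R := 2 * b * D ^ 2 / r ^ 3 * (4 - r) / C_of_ratio Kc r ^ 2.

Lemma C_of_ratio_pos Kc r : 0 < C_of_ratio Kc r.
Proof. apply exp_pos. Qed.

Lemma C_of_ratio_deriv Kc r : 0 < Kc -> 0 < r < 4 ->
  is_derive (C_of_ratio Kc) r (C_of_ratio Kc r * (- / (4 - r) - 5 / r) / 8).
Proof.
  intros HK Hr. unfold C_of_ratio. auto_derive.
  - assert (0 < r ^ 5) by (apply pow_lt; lra). simpl in H.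
    split; [lra | split; auto].
    apply Rmult_lt_0_compat; [nra | apply Rinv_0_lt_compat; lra].
  - unfold Rdiv, Rminus. simpl pow. field. repeat split; lra.
Qed.

Lemma C_of_ratio_continuity_pt Kc r : 0 < Kc -> 0 < r < 4 -> continuity_pt (C_of_ratio Kc) r.
Proof. intros HK Hr. apply continuity_pt_of_ex_derive. eexists. apply C_of_ratio_deriv; auto. Qed.

Lemma C_of_ratio_eq Kc r c : 0 < c -> Kc * (4 - r) / r ^ 5 = c ^ 8 -> C_of_ratio Kc r = c.
Proof.
  intros Hc E. unfold C_of_ratio. rewrite E, ln_pow by exact Hc.
  replace (INR 8 * ln c / 8) with (ln c) by (simpl; field). apply exp_ln, Hc.
Qed.

Lemma ratio_rate_cont_pos b D Kc r : 0 < b -> 0 < D -> 0 < Kc -> 0 < r < 4 ->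
  continuity_pt (ratio_rate b D Kc) r /\ 0 < ratio_rate b D Kc r.
Proof.
  intros Hb HD HK Hr. pose proof (C_of_ratio_pos Kc r). split.
  - unfold ratio_rate. apply cont_pt_div; [apply cont_pt_mult; [apply cont_pt_div|]|..].
    + cont_pt_auto.
    + cont_pt_auto.
    + apply Rgt_not_eq, pow_lt; lra.
    + cont_pt_auto.
    + apply cont_pt_pow, C_of_ratio_continuity_pt; auto.
    + apply Rgt_not_eq, pow_lt; lra.
  - unfold ratio_rate. apply Rdiv_lt_0_compat; [|apply pow_lt; lra].
    apply Rmult_lt_0_compat; [|lra]. apply Rdiv_lt_0_compat; [|apply pow_lt; lra].
    apply Rmult_lt_0_compat; [lra | apply pow_lt; lra].
Qed.

(* For [r0 > 1] the equation is solved through [x = 2 - r], which satisfies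
   [x' = (1 - x) ratio_rate (2 - x)]; the fixed point [r0 = 1] is a constant solution. *)
Lemma ratio_ode_global b D Kc r0 : 0 < b -> 0 < D -> 0 < Kc -> 0 < r0 < 4 ->
  exists r : R -> R, r 0 = r0 /\
    (forall t, 0 <= t -> 0 < r t < 4 /\ continuity_pt r t) /\
    (forall t, 0 < t -> derivable_pt_lim r t ((1 - r t) * ratio_rate b D Kc (r t))).
Proof.
  intros Hb HD HK Hr0.
  destruct (Rtotal_order r0 1) as [Hlt|[Heq|Hgt]].
  - destruct (one_minus_x_ode_global (ratio_rate b D Kc) 0 r0) as [r [Hr0' [Hr Hd]]];
      [lra | intros x Hx; apply ratio_rate_cont_pos; auto; lra |].
    exists r. split; [exact Hr0'|split; [|exact Hd]].
    intros t Ht. destruct (Hr t Ht). split; [lra | auto].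
  - exists (fun _ => r0). split; [reflexivity | split].
    + intros t _. split; [lra | apply cont_pt_const].
    + intros t _. rewrite Heq, Rminus_diag, Rmult_0_l. apply derivable_pt_lim_const.
  - destruct (one_minus_x_ode_global (fun x => ratio_rate b D Kc (2 - x)) (-2) (2 - r0))
      as [x [Hx0 [Hx Hd]]]; [lra | |].
    { intros x Hx. destruct (ratio_rate_cont_pos b D Kc (2 - x)) as [Hc Hp]; auto; try lra.
      split; [|exact Hp]. apply (continuity_pt_comp (fun x => 2 - x)); [cont_pt_auto | exact Hc]. }
    exists (fun t => 2 - x t). split; [lra | split].
    + intros t Ht. destruct (Hx t Ht). split; [lra | cont_pt_auto].
    + intros t Ht.
      replace ((1 - (2 - x t)) * ratio_rate b D Kc (2 - x t))
        with (0 - (1 - x t) * ratio_rate b D Kc (2 - x t)) by ring.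
      apply derivable_pt_lim_minus; [apply derivable_pt_lim_const | apply Hd, Ht].
Qed.

Definition reduced_flow (b : R) (G0 A C : R -> R) : Prop :=
  forall t, 0 < t ->
    derivable_pt_lim G0 t (- b * (C t ^ 2 * (A t - C t) ^ 2) * G0 t ^ 3) /\
    derivable_pt_lim A t (b * (C t ^ 2 * (A t - C t) * (A t - 3 * C t)) * G0 t ^ 2 * A t) /\
    derivable_pt_lim C t (- b * (C t ^ 2 * (A t - C t) * (A t - 5 * C t)) * G0 t ^ 2 * C t).

Lemma reduced_flow_of_ratio b D Kc (r : R -> R) : 0 < b -> 0 < D -> 0 < Kc ->
  (forall t, 0 <= t -> 0 < r t < 4 /\ continuity_pt r t) ->
  (forall t, 0 < t -> derivable_pt_lim r t ((1 - r t) * ratio_rate b D Kc (r t))) ->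
  reduced_flow b (fun t => D / ((r t * C_of_ratio Kc (r t)) ^ 2 * C_of_ratio Kc (r t)))
    (fun t => r t * C_of_ratio Kc (r t)) (fun t => C_of_ratio Kc (r t)).
Proof.
  intros Hb HD HK Hr Hrd t Ht.
  destruct (Hr t ltac:(lra)) as [Hrt _].
  set (rho := r t) in Hrt |- *. set (c := C_of_ratio Kc rho). set (k := (- / (4 - rho) - 5 / rho) / 8).
  assert (Hc : 0 < c) by apply C_of_ratio_pos.
  set (drho := (1 - rho) * ratio_rate b D Kc rho).
  assert (Hdr : is_derive r t drho) by (apply is_derive_Reals, Hrd, Ht).
  assert (Hck : is_derive (C_of_ratio Kc) rho (c * k)).
  { replace (c * k) with (C_of_ratio Kc rho * (- / (4 - rho) - 5 / rho) / 8)
      by (unfold c, k, Rdiv; ring).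
    apply C_of_ratio_deriv; auto. }
  assert (HdC : is_derive (fun s => C_of_ratio Kc (r s)) t (drho * (c * k)))
    by exact (is_derive_comp (C_of_ratio Kc) r t _ _ Hck Hdr).
  assert (HdA : is_derive (fun s => r s * C_of_ratio Kc (r s)) t (drho * c + rho * (drho * (c * k)))).
  { apply (is_derive_mult r (fun s => C_of_ratio Kc (r s))); auto. intros; apply Rmult_comm. }
  assert (HdG : is_derive (fun s => D / ((r s * C_of_ratio Kc (r s)) ^ 2 * C_of_ratio Kc (r s))) t
    (- D * (2 * (rho * c) * (drho * c + rho * (drho * (c * k))) * c + (rho * c) ^ 2 * (drho * (c * k)))
       / ((rho * c) ^ 2 * c) ^ 2)).
  { auto_derive.
    - repeat split; try (eexists; eassumption).
      fold rho c. assert (Hrc : 0 < rho * c) by (apply Rmult_lt_0_compat; lra).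
      apply Rgt_not_eq. repeat apply Rmult_lt_0_compat; lra.
    - replace (Derive (fun x => r x) t) with drho by (symmetry; apply is_derive_unique, Hdr).
      replace (Derive (fun x => C_of_ratio Kc x) (r t)) with (c * k)
        by (symmetry; apply is_derive_unique, Hck).
      fold rho c.
      field. split; [lra | apply Rgt_not_eq; nra]. }
  assert (E4 : 4 - rho <> 0) by lra. assert (Er : rho <> 0) by lra.
  unfold drho, ratio_rate, k in HdC, HdA, HdG. fold c in HdC, HdA, HdG. fold rho c.
  split; [|split]; apply is_derive_Reals.
  - match type of HdG with is_derive _ _ ?d => replace (- b * _ * _) with d end;
      [exact HdG | field; repeat split; lra].
  - match type of HdA with is_derive _ _ ?d => replace (b * _ * _ * _) with d end;
      [exact HdA | field; repeat split; lra].
  - match type of HdC with is_derive _ _ ?d => replace (- b * _ * _ * _) with d end;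
      [exact HdC | field; repeat split; lra].
Qed.

Lemma reduced_flow_exists h0 a c b : 0 < h0 -> 0 < a -> 0 < c -> a < 4 * c -> 0 < b ->
  exists G0 A C : R -> R,
    G0 0 = h0 /\ A 0 = a /\ C 0 = c /\
    continuity_pt G0 0 /\ continuity_pt A 0 /\ continuity_pt C 0 /\ reduced_flow b G0 A C.
Proof.
  intros H0 Ha Hc Hac Hb.
  set (D := h0 * a ^ 2 * c). set (Kc := D ^ 4 / (h0 ^ 4 * a ^ 3 * (4 * c - a))).
  assert (HD : 0 < D) by (unfold D; repeat apply Rmult_lt_0_compat; try apply pow_lt; lra).
  assert (HK : 0 < Kc).
  { apply Rdiv_lt_0_compat; [apply pow_lt, HD|].
    repeat apply Rmult_lt_0_compat; try apply pow_lt; lra. }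
  assert (Hr0 : 0 < a / c < 4).
  { split; [apply Rdiv_lt_0_compat; lra|].
    apply (Rmult_lt_reg_r c); [lra|]. unfold Rdiv. rewrite Rmult_assoc, Rinv_l; lra. }
  destruct (ratio_ode_global b D Kc (a / c) Hb HD HK Hr0) as [r [Hr0' [Hr Hrd]]].
  assert (HC0 : C_of_ratio Kc (r 0) = c).
  { rewrite Hr0'. apply C_of_ratio_eq; [lra|]. unfold Kc, D. field. lra. }
  destruct (Hr 0 (Rle_refl 0)) as [Hr00 Hrc0].
  assert (Hcc : continuity_pt (C_of_ratio Kc) (r 0)) by (apply C_of_ratio_continuity_pt; auto).
  exists (fun t => D / ((r t * C_of_ratio Kc (r t)) ^ 2 * C_of_ratio Kc (r t))),
         (fun t => r t * C_of_ratio Kc (r t)), (fun t => C_of_ratio Kc (r t)).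
  split; [|split; [|split; [|split; [|split; [|split]]]]].
  - rewrite HC0, Hr0'. unfold D. field. lra.
  - rewrite HC0, Hr0'. field. lra.
  - exact HC0.
  - apply (continuity_pt_comp r (fun x => D / ((x * C_of_ratio Kc x) ^ 2 * C_of_ratio Kc x)));
      [exact Hrc0|].
    apply cont_pt_div; [cont_pt_auto | cont_pt_auto |].
    rewrite HC0. apply Rgt_not_eq, Rmult_lt_0_compat; [apply pow_lt; nra | lra].
  - apply cont_pt_mult; [exact Hrc0 | apply (continuity_pt_comp r); assumption].
  - apply (continuity_pt_comp r); assumption.
  - apply reduced_flow_of_ratio; auto.
Qed.

Lemma right_cont0_joint g0 g1 g2 g3 :
  right_cont0 g0 -> right_cont0 g1 -> right_cont0 g2 -> right_cont0 g3 ->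
  forall eps, 0 < eps -> exists delta, 0 < delta /\ forall t, 0 <= t < delta ->
    Rabs (g0 t - g0 0) < eps /\ Rabs (g1 t - g1 0) < eps /\
    Rabs (g2 t - g2 0) < eps /\ Rabs (g3 t - g3 0) < eps.
Proof.
  intros H0 H1 H2 H3 eps He.
  destruct (H0 eps He) as [d0 [Hd0 Hd0']], (H1 eps He) as [d1 [Hd1 Hd1']],
           (H2 eps He) as [d2 [Hd2 Hd2']], (H3 eps He) as [d3 [Hd3 Hd3']].
  exists (Rmin (Rmin d0 d1) (Rmin d2 d3)). split; [repeat apply Rmin_pos; auto|].
  intros t [Ht1 Ht2].
  pose proof (Rmin_l (Rmin d0 d1) (Rmin d2 d3)). pose proof (Rmin_r (Rmin d0 d1) (Rmin d2 d3)).
  pose proof (Rmin_l d0 d1). pose proof (Rmin_r d0 d1).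
  pose proof (Rmin_l d2 d3). pose proof (Rmin_r d2 d3).
  repeat split; [apply Hd0' | apply Hd1' | apply Hd2' | apply Hd3']; lra.
Qed.

Lemma p_poly_AAC a c : p_poly a a c = c ^ 2 * (a - c) ^ 2.
Proof. unfold p_poly. ring. Qed.
Lemma p_poly_CAA a c : p_poly c a a = c ^ 2 * (a - c) ^ 2.
Proof. unfold p_poly. ring. Qed.
Lemma q_poly_AAC a c : q_poly a a c = - (c ^ 2 * (a - c) * (a - 3 * c)).
Proof. unfold q_poly. ring. Qed.
Lemma q_poly_ACA a c : q_poly a c a = - (c ^ 2 * (a - c) * (a - 3 * c)).
Proof. unfold q_poly. ring. Qed.
Lemma q_poly_CAA a c : q_poly c a a = c ^ 2 * (a - c) * (a - 5 * c).
Proof. unfold q_poly. ring. Qed.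

Lemma beta_pos h0 h1 h2 h3 : 0 < h0 -> 0 < h1 -> 0 < h2 -> 0 < h3 -> 0 < beta h0 h1 h2 h3.
Proof.
  intros. unfold beta, deth. apply Rdiv_lt_0_compat; [lra|].
  apply Rmult_lt_0_compat; [lra | apply pow_lt; repeat apply Rmult_lt_0_compat; auto].
Qed.

Lemma derivable_pt_lim_eq_val f x l l' : derivable_pt_lim f x l -> l = l' -> derivable_pt_lim f x l'.
Proof. intros H <-. exact H. Qed.

Lemma S3_existence_AAC h0 a c : 0 < h0 -> 0 < a -> 0 < c -> a < 4 * c ->
  exists g0 g1 g2 g3 : R -> R, solves_S3_global h0 a a c g0 g1 g2 g3.
Proof.
  intros H0 Ha Hc Hac.
  destruct (reduced_flow_exists h0 a c (beta h0 a a c)) as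
    (G0 & A & C & E0 & EA & EC & HG0 & HA & HC & Hflow); auto using beta_pos.
  exists G0, A, A, C. split; [exact E0 | split; [exact EA | split; [exact EA | split; [exact EC | split]]]].
  - rewrite <- E0, <- EA, <- EC. apply right_cont0_joint; apply right_cont0_of_continuity_pt; auto.
  - intros t Ht. cbv zeta. rewrite p_poly_AAC, q_poly_AAC, q_poly_ACA, q_poly_CAA.
    destruct (Hflow t Ht) as (DG & DA & DC).
    split; [|split; [|split]]; (eapply derivable_pt_lim_eq_val; [eassumption | ring]).
Qed.

Lemma S3_existence_CAA h0 c a : 0 < h0 -> 0 < a -> 0 < c -> a < 4 * c ->
  exists g0 g1 g2 g3 : R -> R, solves_S3_global h0 c a a g0 g1 g2 g3.
Proof.
  intros H0 Ha Hc Hac.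
  destruct (reduced_flow_exists h0 a c (beta h0 c a a)) as
    (G0 & A & C & E0 & EA & EC & HG0 & HA & HC & Hflow); auto using beta_pos.
  exists G0, C, A, A. split; [exact E0 | split; [exact EC | split; [exact EA | split; [exact EA | split]]]].
  - rewrite <- E0, <- EA, <- EC. apply right_cont0_joint; apply right_cont0_of_continuity_pt; auto.
  - intros t Ht. cbv zeta. rewrite p_poly_CAA, q_poly_AAC, q_poly_ACA, q_poly_CAA.
    destruct (Hflow t Ht) as (DG & DA & DC).
    split; [|split; [|split]]; (eapply derivable_pt_lim_eq_val; [eassumption | ring]).
Qed.

Lemma cv_infty_to_ext f g L : cv_infty_to f L -> (forall t, 0 <= t -> f t = g t) -> cv_infty_to g L.
Proof.
  intros H E eps He. destruct (H eps He) as [T HT]. exists (Rmax T 0). intros t Ht.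
  rewrite <- E by (pose proof (Rmax_r T 0); lra). apply HT. pose proof (Rmax_l T 0); lra.
Qed.

Lemma cv_infty_to_comp r F l : cv_infty_to r l -> continuity_pt F l ->
  cv_infty_to (fun t => F (r t)) (F l).
Proof.
  intros Hr HF eps He. destruct (HF eps He) as [d [Hd Hd']].
  destruct (Hr d Hd) as [T HT]. exists T. intros t Ht.
  destruct (Req_dec (r t) l) as [E|E]; [rewrite E, Rminus_diag, Rabs_R0; lra|].
  apply (Hd' (r t)). split; [split; [exact I | auto] | apply HT, Ht].
Qed.

Lemma Rpower_pow_INR x y n : 0 < x -> Rpower x y ^ n = Rpower x (y * INR n).
Proof. intros Hx. rewrite <- Rpower_mult, <- (Rpower_pow n) by apply exp_pos. reflexivity. Qed.

Lemma C_of_ratio_one D kap : 0 < D -> 0 < kap ->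
  C_of_ratio (D ^ 4 / kap) 1 = Rpower (3 / kap) (1 / 8) * Rpower D (1 / 2).
Proof.
  intros HD Hk. apply C_of_ratio_eq; [apply Rmult_lt_0_compat; apply exp_pos|].
  assert (H3 : 0 < 3 / kap) by (apply Rdiv_lt_0_compat; lra).
  rewrite Rpow_mult_distr, !Rpower_pow_INR by assumption.
  replace (1 / 8 * INR 8) with 1 by (simpl; field).
  replace (1 / 2 * INR 8) with (INR 4) by (simpl; field).
  rewrite Rpower_1, Rpower_pow by assumption. field. lra.
Qed.

Lemma limit_g0_value D kap : 0 < D -> 0 < kap ->
  D / (Rpower (3 / kap) (1 / 8) * Rpower D (1 / 2)) ^ 3
  = Rpower (kap / 3) (3 / 8) * Rpower D (- (1 / 2)).
Proof.
  intros HD Hk. assert (H3 : 0 < 3 / kap) by (apply Rdiv_lt_0_compat; lra).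
  rewrite Rpow_mult_distr, !Rpower_pow_INR by assumption.
  replace (kap / 3) with (/ (3 / kap)) by (field; lra).
  unfold Rpower at 3. rewrite ln_Rinv by exact H3.
  replace D with (Rpower D (1 / 2 * INR 3) * Rpower D (- (1 / 2))) at 1
    by (rewrite <- Rpower_plus; replace (1 / 2 * INR 3 + - (1 / 2)) with 1 by (simpl; field);
        apply Rpower_1, HD).
  replace (1 / 8 * INR 3) with (3 / 8) by (simpl; field).
  unfold Rpower. replace (3 / 8 * - ln (3 / kap)) with (- (3 / 8 * ln (3 / kap))) by ring.
  rewrite exp_Ropp. field. split; apply Rgt_not_eq, exp_pos.
Qed.

Section ReducedFlowAnalysis.

Variables (b D kap : R) (G0 A C dA dC : R -> R).
Hypotheses (Hb : 0 < b) (HD : 0 < D) (Hk : 0 < kap).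
Hypotheses (HA : is_deriv_pos A dA) (HC : is_deriv_pos C dC) (HG0 : forall t, continuity_pt G0 t).
Hypothesis Hpos : forall t, 0 < G0 t /\ 0 < A t /\ 0 < C t.
Hypothesis Hdet : forall t, 0 <= t -> G0 t * A t ^ 2 * C t = D.
Hypothesis Hkap : forall t, 0 <= t -> (4 * D - G0 t * A t ^ 3) * G0 t ^ 3 * A t = kap.
Hypothesis HdA : forall t, 0 < t ->
  dA t = b * G0 t ^ 2 * C t ^ 2 * (A t - C t) * (A t - 3 * C t) * A t.
Hypothesis HdC : forall t, 0 < t ->
  dC t = - b * G0 t ^ 2 * C t ^ 2 * (A t - C t) * (A t - 5 * C t) * C t.

Let ratio (t : R) : R := A t / C t.
Let rate (t : R) : R := 2 * b * G0 t ^ 2 * A t * C t ^ 2 * (A t - 4 * C t).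

Lemma kappa_factor t : 0 <= t -> kap = G0 t ^ 4 * A t ^ 3 * (4 * C t - A t).
Proof. intros Ht. rewrite <- (Hkap t Ht), <- (Hdet t Ht). ring. Qed.

Lemma reduced_A_lt_4C t : 0 <= t -> A t < 4 * C t.
Proof.
  intros Ht. destruct (Hpos t) as (P0 & PA & PC). pose proof (kappa_factor t Ht).
  assert (0 < G0 t ^ 4 * A t ^ 3) by (apply Rmult_lt_0_compat; apply pow_lt; auto).
  destruct (Rlt_or_le (A t) (4 * C t)) as [|Hge]; auto.
  assert (G0 t ^ 4 * A t ^ 3 * (4 * C t - A t) <= 0) by (apply Rmult_le_0_l; lra). lra.
Qed.

Lemma rate_neg t : 0 <= t -> rate t < 0.
Proof.
  intros Ht. destruct (Hpos t) as (P0 & PA & PC). pose proof (reduced_A_lt_4C t Ht).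
  assert (0 < 2 * b * G0 t ^ 2 * A t * C t ^ 2)
    by (repeat apply Rmult_lt_0_compat; try apply pow_lt; lra).
  unfold rate. nra.
Qed.

Lemma rate_continuity_pt t : continuity_pt rate t.
Proof. destruct HA as [HAc _], HC as [HCc _]. unfold rate. cont_pt_auto. Qed.

Lemma ratio_linear_ode :
  is_deriv_pos (fun t => ratio t - 1) (fun t => (ratio t - 1) * rate t).
Proof.
  destruct HA as [HAc HAd], HC as [HCc HCd]. split.
  - intros t. destruct (Hpos t) as (_ & _ & PC).
    unfold ratio. apply cont_pt_minus; [apply cont_pt_div; auto; lra | apply cont_pt_const].
  - intros t Ht. destruct (Hpos t) as (P0 & PA & PC).
    assert (DA : is_derive A t (dA t)) by (apply is_derive_Reals, HAd, Ht).
    assert (DC : is_derive C t (dC t)) by (apply is_derive_Reals, HCd, Ht).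
    apply is_derive_Reals. unfold ratio, rate. auto_derive.
    + repeat split; try (eexists; eassumption). lra.
    + replace (Derive (fun x => A x) t) with (dA t) by (symmetry; apply is_derive_unique, DA).
      replace (Derive (fun x => C x) t) with (dC t) by (symmetry; apply is_derive_unique, DC).
      rewrite HdA, HdC by exact Ht. field. lra.
Qed.

Lemma ratio_dist_sq_le t : 0 <= t -> (ratio t - 1) ^ 2 <= (ratio 0 - 1) ^ 2.
Proof.
  intros Ht.
  pose proof (linear_ode_sq_exp_le _ _ _ ratio_linear_ode (fun _ _ => eq_refl) 0 t Ht) as H.
  rewrite !Rmult_0_r, Rmult_0_l, exp_0, Rmult_1_r in H. apply H.
  intros s Hs. pose proof (rate_neg s ltac:(lra)). lra.
Qed.

Let ratio_max : R := 1 + Rabs (ratio 0 - 1).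

Lemma ratio_bounds t : 0 <= t -> 0 < ratio t <= ratio_max /\ ratio_max < 4.
Proof.
  intros Ht. destruct (Hpos t) as (_ & PA & PC), (Hpos 0) as (_ & PA0 & PC0).
  assert (H4 : ratio 0 < 4).
  { unfold ratio. apply (Rmult_lt_reg_r (C 0)); [lra|]. unfold Rdiv.
    rewrite Rmult_assoc, Rinv_l by lra. pose proof (reduced_A_lt_4C 0 (Rle_refl 0)). lra. }
  assert (H0 : 0 < ratio 0) by (apply Rdiv_lt_0_compat; lra).
  split; [split|].
  - apply Rdiv_lt_0_compat; lra.
  - assert (Rabs (ratio t - 1) <= Rabs (ratio 0 - 1)).
    { apply Rsqr_le_abs_0. unfold Rsqr. pose proof (ratio_dist_sq_le t Ht). simpl in H. lra. }
    pose proof (Rle_abs (ratio t - 1)). unfold ratio_max. lra.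
  - unfold ratio_max. destruct (Rle_dec 0 (ratio 0 - 1));
      [rewrite Rabs_right by lra | rewrite Rabs_left by lra]; lra.
Qed.

(* [(-rate)^4 ratio^7 = 16 b^4 D^4 kap (4 - ratio)^3], and [ratio] stays in [(0, ratio_max]]. *)
Lemma rate_uniform_neg : exists k, 0 < k /\ forall t, 0 <= t -> rate t <= - k.
Proof.
  pose proof (ratio_bounds 0 (Rle_refl 0)) as [_ Hmax4].
  assert (Hmax0 : 0 < ratio_max) by (unfold ratio_max; pose proof (Rabs_pos (ratio 0 - 1)); lra).
  set (k4 := 16 * b ^ 4 * D ^ 4 * kap * (4 - ratio_max) ^ 3 / ratio_max ^ 7).
  assert (Hk4 : 0 < k4).
  { apply Rdiv_lt_0_compat; [|apply pow_lt; lra].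
    repeat apply Rmult_lt_0_compat; try apply pow_lt; lra. }
  exists (Rmin 1 k4). split; [apply Rmin_pos; lra|]. intros t Ht.
  destruct (Hpos t) as (P0 & PA & PC). destruct (ratio_bounds t Ht) as [[Hr0 Hr1] _].
  set (Q := - rate t). assert (HQ : 0 < Q) by (unfold Q; pose proof (rate_neg t Ht); lra).
  assert (HQ4 : Q ^ 4 = 16 * b ^ 4 * D ^ 4 * kap * (4 - ratio t) ^ 3 / ratio t ^ 7).
  { unfold Q, rate, ratio. rewrite (kappa_factor t Ht), <- (Hdet t Ht). field. lra. }
  assert (Hq4 : k4 <= Q ^ 4).
  { rewrite HQ4. unfold k4, Rdiv. apply Rmult_le_compat.
    - repeat apply Rmult_le_pos; try apply pow_le; lra.
    - left. apply Rinv_0_lt_compat, pow_lt. lra.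
    - apply Rmult_le_compat_l; [repeat apply Rmult_le_pos; try apply pow_le; lra|].
      apply pow_incr. lra.
    - apply Rinv_le_contravar; [apply pow_lt; lra | apply pow_incr; lra]. }
  enough (Rmin 1 k4 <= Q) by (unfold Q in *; lra).
  destruct (Rle_dec 1 Q); [pose proof (Rmin_l 1 k4); lra|].
  assert (Q ^ 3 <= 1) by (replace 1 with (1 ^ 3) by ring; apply pow_incr; lra).
  assert (Q ^ 4 <= Q) by (replace (Q ^ 4) with (Q * Q ^ 3) by ring; nra).
  pose proof (Rmin_r 1 k4). lra.
Qed.

Lemma ratio_cv : cv_infty_to ratio 1.
Proof.
  destruct rate_uniform_neg as [k [Hk0 Hrate]].
  set (y0 := (ratio 0 - 1) ^ 2). assert (Hy0 : 0 <= y0) by apply pow2_ge_0.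
  intros eps Heps. assert (He2 : 0 < eps ^ 2) by (apply pow_lt; lra).
  exists (y0 / (2 * k * eps ^ 2)). intros t Ht.
  assert (Ht0 : 0 <= t).
  { eapply Rle_trans; [|exact Ht].
    apply Rdiv_le_0_compat; [exact Hy0 | apply Rmult_lt_0_compat; lra]. }
  assert (Hdecay : (ratio t - 1) ^ 2 * exp (2 * k * t) <= y0).
  { apply (linear_ode_sq_exp_le _ _ _ ratio_linear_ode (fun _ _ => eq_refl) k t Ht0).
    intros s Hs. apply Hrate. lra. }
  assert (Hexp : 1 + 2 * k * t <= exp (2 * k * t)) by apply exp_ineq1_le.
  assert (HT : y0 <= 2 * k * eps ^ 2 * t).
  { apply (Rmult_le_compat_l (2 * k * eps ^ 2)) in Ht; [|nra].
    unfold Rdiv in Ht. rewrite <- Rmult_assoc, (Rmult_comm (2 * k * eps ^ 2) y0),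
      Rmult_assoc, Rinv_r in Ht by nra. lra. }
  assert (Hsq : (ratio t - 1) ^ 2 < eps ^ 2).
  { set (Y := (ratio t - 1) ^ 2) in *. assert (0 <= Y) by apply pow2_ge_0.
    assert (Y * (1 + 2 * k * t) <= Y * exp (2 * k * t)) by (apply Rmult_le_compat_l; lra).
    assert (0 < 2 * k * t + 1) by nra.
    apply (Rmult_lt_reg_r (1 + 2 * k * t)); nra. }
  assert (Hs : Rsqr (ratio t - 1) < Rsqr eps) by (unfold Rsqr; simpl in Hsq; lra).
  apply Rsqr_lt_abs_0 in Hs. rewrite (Rabs_right eps) in Hs by lra. exact Hs.
Qed.

Lemma reduced_order_preserved t : 0 <= t ->
  (A 0 < C 0 -> A t < C t) /\ (C 0 < A 0 -> C t < A t).
Proof.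
  intros Ht. destruct (Hpos t) as (_ & _ & PC), (Hpos 0) as (_ & _ & PC0).
  assert (Hrt : forall s, 0 < C s -> ratio s - 1 = (A s - C s) / C s)
    by (intros s Hs; unfold ratio; field; lra).
  assert (Hlin : forall s, 0 < s -> (fun s => (ratio s - 1) * rate s) s = (ratio s - 1) * rate s)
    by reflexivity.
  pose proof (linear_ode_sign _ _ _ ratio_linear_ode Hlin rate_continuity_pt t Ht) as [_ Habove].
  pose proof (linear_ode_sign _ _ rate (is_deriv_pos_opp _ _ ratio_linear_ode)
    ltac:(intros s _; cbv beta; ring) rate_continuity_pt t Ht) as [_ Hbelow].
  rewrite !Hrt in Habove, Hbelow by assumption.
  assert (HCi : 0 < / C t) by (apply Rinv_0_lt_compat; lra).
  split; intros Hlt.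
  - enough (0 < - ((A t - C t) / C t)) by (unfold Rdiv in H; nra).
    apply Hbelow. enough (0 < (C 0 - A 0) / C 0) by (unfold Rdiv in *; lra).
    apply Rdiv_lt_0_compat; lra.
  - enough (0 < (A t - C t) / C t) by (unfold Rdiv in H; nra).
    apply Habove, Rdiv_lt_0_compat; lra.
Qed.

Lemma reduced_mono_below : A 0 < C 0 -> incr_on_nonneg A /\ decr_on_nonneg C.
Proof.
  intros H0. split; intros s t Hs Hst.
  - apply (is_deriv_pos_lt _ _ HA s t Hs Hst). intros c Hc.
    destruct (Hpos c) as (P0 & PA & PC). pose proof (proj1 (reduced_order_preserved c ltac:(lra)) H0).
    rewrite HdA by lra.
    assert (0 < b * G0 c ^ 2 * C c ^ 2) by (repeat apply Rmult_lt_0_compat; try apply pow_lt; lra).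
    assert (0 < (A c - C c) * (A c - 3 * C c)) by nra.
    replace (b * G0 c ^ 2 * C c ^ 2 * (A c - C c) * (A c - 3 * C c) * A c)
      with (b * G0 c ^ 2 * C c ^ 2 * ((A c - C c) * (A c - 3 * C c)) * A c) by ring.
    apply Rmult_lt_0_compat; [apply Rmult_lt_0_compat|]; lra.
  - enough (- C s < - C t) by lra.
    apply (is_deriv_pos_lt _ _ (is_deriv_pos_opp _ _ HC) s t Hs Hst). intros c Hc.
    destruct (Hpos c) as (P0 & PA & PC). pose proof (proj1 (reduced_order_preserved c ltac:(lra)) H0).
    rewrite HdC by lra.
    assert (0 < b * G0 c ^ 2 * C c ^ 2) by (repeat apply Rmult_lt_0_compat; try apply pow_lt; lra).
    assert (0 < (A c - C c) * (A c - 5 * C c)) by nra.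
    replace (- (- b * G0 c ^ 2 * C c ^ 2 * (A c - C c) * (A c - 5 * C c) * C c))
      with (b * G0 c ^ 2 * C c ^ 2 * ((A c - C c) * (A c - 5 * C c)) * C c) by ring.
    apply Rmult_lt_0_compat; [apply Rmult_lt_0_compat|]; lra.
Qed.

Lemma reduced_mono_above : C 0 < A 0 -> incr_on_nonneg C.
Proof.
  intros H0 s t Hs Hst. apply (is_deriv_pos_lt _ _ HC s t Hs Hst). intros c Hc.
  destruct (Hpos c) as (P0 & PA & PC). pose proof (proj2 (reduced_order_preserved c ltac:(lra)) H0).
  pose proof (reduced_A_lt_4C c ltac:(lra)). rewrite HdC by lra.
  assert (0 < b * G0 c ^ 2 * C c ^ 2) by (repeat apply Rmult_lt_0_compat; try apply pow_lt; lra).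
  assert (0 < - ((A c - C c) * (A c - 5 * C c))) by nra.
  replace (- b * G0 c ^ 2 * C c ^ 2 * (A c - C c) * (A c - 5 * C c) * C c)
    with (b * G0 c ^ 2 * C c ^ 2 * (- ((A c - C c) * (A c - 5 * C c))) * C c) by ring.
  apply Rmult_lt_0_compat; [apply Rmult_lt_0_compat|]; lra.
Qed.

Lemma reduced_C_of_ratio t : 0 <= t -> C t = C_of_ratio (D ^ 4 / kap) (ratio t).
Proof.
  intros Ht. destruct (Hpos t) as (P0 & PA & PC). pose proof (reduced_A_lt_4C t Ht).
  symmetry. apply C_of_ratio_eq; [exact PC|].
  unfold ratio. rewrite (kappa_factor t Ht), <- (Hdet t Ht). field. repeat split; lra.
Qed.

Lemma reduced_limits :
  let L := Rpower (3 / kap) (1 / 8) * Rpower D (1 / 2) in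
  cv_infty_to G0 (Rpower (kap / 3) (3 / 8) * Rpower D (- (1 / 2))) /\
  cv_infty_to A L /\ cv_infty_to C L.
Proof.
  intros L. set (Kc := D ^ 4 / kap).
  assert (HKc : 0 < Kc) by (apply Rdiv_lt_0_compat; [apply pow_lt|]; lra).
  assert (HL : C_of_ratio Kc 1 = L) by (apply C_of_ratio_one; lra).
  assert (Hc1 : continuity_pt (C_of_ratio Kc) 1) by (apply C_of_ratio_continuity_pt; lra).
  assert (HLp : 0 < L) by (rewrite <- HL; apply C_of_ratio_pos).
  assert (HCr := reduced_C_of_ratio).
  split; [|split].
  - rewrite <- limit_g0_value by lra. fold L. rewrite <- HL.
    replace (C_of_ratio Kc 1 ^ 3) with ((1 * C_of_ratio Kc 1) ^ 2 * C_of_ratio Kc 1) by ring.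
    apply (cv_infty_to_ext (fun t => (fun r => D / ((r * C_of_ratio Kc r) ^ 2 * C_of_ratio Kc r)) (ratio t))).
    + apply (cv_infty_to_comp ratio (fun r => D / ((r * C_of_ratio Kc r) ^ 2 * C_of_ratio Kc r)));
        [exact ratio_cv|].
      apply cont_pt_div; [cont_pt_auto | cont_pt_auto |].
      rewrite HL. apply Rgt_not_eq, Rmult_lt_0_compat; [apply pow_lt|]; lra.
    + intros t Ht. destruct (Hpos t) as (_ & PA & PC). cbv beta. rewrite <- HCr by exact Ht.
      rewrite <- (Hdet t Ht). unfold ratio. field. split; lra.
  - rewrite <- HL. replace (C_of_ratio Kc 1) with (1 * C_of_ratio Kc 1) by ring.
    apply (cv_infty_to_ext (fun t => (fun r => r * C_of_ratio Kc r) (ratio t))).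
    + apply (cv_infty_to_comp ratio (fun r => r * C_of_ratio Kc r)); [exact ratio_cv | cont_pt_auto].
    + intros t Ht. destruct (Hpos t) as (_ & _ & PC). cbv beta. rewrite <- HCr by exact Ht.
      unfold ratio. field. lra.
  - rewrite <- HL. apply (cv_infty_to_ext (fun t => C_of_ratio Kc (ratio t))).
    + apply (cv_infty_to_comp ratio (C_of_ratio Kc)); [exact ratio_cv | exact Hc1].
    + intros t Ht. symmetry. apply HCr, Ht.
Qed.

Lemma reduced_flow_behaviour :
  (cv_infty_to G0 (Rpower (kap / 3) (3 / 8) * Rpower D (- (1 / 2))) /\
   cv_infty_to A (Rpower (3 / kap) (1 / 8) * Rpower D (1 / 2)) /\
   cv_infty_to C (Rpower (3 / kap) (1 / 8) * Rpower D (1 / 2))) /\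
  (A 0 < C 0 -> incr_on_nonneg A /\ decr_on_nonneg C) /\
  (C 0 < A 0 -> incr_on_nonneg C).
Proof. split; [exact reduced_limits | split; [exact reduced_mono_below | exact reduced_mono_above]]. Qed.

End ReducedFlowAnalysis.

Definition kappa_of (h0 h1 h2 h3 : R) : R := (4 * deth h0 h1 h2 h3 - h0 * h2 ^ 3) * h0 ^ 3 * h2.

Lemma kappa_of_factor h0 h1 h2 h3 :
  kappa_of h0 h1 h2 h3 = h0 ^ 4 * h2 ^ 2 * (4 * h1 * h3 - h2 ^ 2).
Proof. unfold kappa_of, deth. ring. Qed.

Lemma p_q_poly_sum x y z : p_poly x y z + q_poly x y z + q_poly y z x + q_poly z x y = 0.
Proof. unfold p_poly, q_poly. ring. Qed.

Definition q_poly_diff_quot (x y z : R) : R :=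
  5*x^4 + 5*x^3*y - 3*x^3*z + 4*x^2*y^2 - 5*x^2*y*z + 5*x*y^3 - 5*x*y^2*z - x*y*z^2 + x*z^3
  + 5*y^4 - 3*y^3*z + y*z^3 - 3*z^4.

Lemma q_poly_diff x y z : q_poly x y z * x - q_poly y z x * y = (x - y) * q_poly_diff_quot x y z.
Proof. unfold q_poly, q_poly_diff_quot. ring. Qed.

(* [X - Y] solves a linear ODE, hence stays 0. *)
Lemma S3_pair_eq b (W X Y Z dX dY : R -> R) :
  (forall t, continuity_pt W t) -> (forall t, continuity_pt Z t) ->
  is_deriv_pos X dX -> is_deriv_pos Y dY ->
  (forall t, 0 < t -> dX t = - b * q_poly (X t) (Y t) (Z t) * W t ^ 2 * X t) ->
  (forall t, 0 < t -> dY t = - b * q_poly (Y t) (Z t) (X t) * W t ^ 2 * Y t) ->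
  X 0 = Y 0 -> forall t, 0 <= t -> X t = Y t.
Proof.
  intros HW HZ HX HY HdX HdY E0 t Ht.
  assert (HXc := proj1 HX). assert (HYc := proj1 HY).
  enough (X t - Y t = 0) by lra.
  apply (linear_ode_sign _ _ (fun s => - b * W s ^ 2 * q_poly_diff_quot (X s) (Y s) (Z s))
    (is_deriv_pos_minus _ _ _ _ HX HY)); [| |exact Ht|lra].
  - intros s Hs. rewrite HdX, HdY by exact Hs.
    transitivity (- b * W s ^ 2 * (q_poly (X s) (Y s) (Z s) * X s - q_poly (Y s) (Z s) (X s) * Y s));
      [ring|]. rewrite q_poly_diff. ring.
  - intros s. unfold q_poly_diff_quot. cont_pt_auto.
Qed.

Definition S3_converges (h0 h1 h2 h3 : R) (g0 g1 g2 g3 : R -> R) : Prop :=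
  let D := deth h0 h1 h2 h3 in
  let kappa := kappa_of h0 h1 h2 h3 in
  cv_infty_to g0 (Rpower (kappa / 3) (3 / 8) * Rpower D (- (1 / 2))) /\
  cv_infty_to g1 (Rpower (3 / kappa) (1 / 8) * Rpower D (1 / 2)) /\
  cv_infty_to g2 (Rpower (3 / kappa) (1 / 8) * Rpower D (1 / 2)) /\
  cv_infty_to g3 (Rpower (3 / kappa) (1 / 8) * Rpower D (1 / 2)).

Lemma incr_on_nonneg_ext f g : (forall t, 0 <= t -> f t = g t) ->
  incr_on_nonneg f -> incr_on_nonneg g.
Proof. intros E H s t Hs Hst. rewrite <- !E by lra. apply H; auto. Qed.

Lemma decr_on_nonneg_ext f g : (forall t, 0 <= t -> f t = g t) ->
  decr_on_nonneg f -> decr_on_nonneg g.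
Proof. intros E H s t Hs Hst. rewrite <- !E by lra. apply H; auto. Qed.

Section S3Solution.

Variables (h0 h1 h2 h3 : R) (g0 g1 g2 g3 : R -> R).
Hypotheses (H0 : 0 < h0) (H1 : 0 < h1) (H2 : 0 < h2) (H3 : 0 < h3).
Hypothesis Hsol : solves_S3_global h0 h1 h2 h3 g0 g1 g2 g3.

Let b : R := beta h0 h1 h2 h3.
Let D : R := deth h0 h1 h2 h3.
Let G0 : R -> R := extend0 g0.
Let G1 : R -> R := extend0 g1.
Let G2 : R -> R := extend0 g2.
Let G3 : R -> R := extend0 g3.
Let d0 (t : R) : R := - b * p_poly (G1 t) (G2 t) (G3 t) * G0 t ^ 3.
Let d1 (t : R) : R := - b * q_poly (G1 t) (G2 t) (G3 t) * G0 t ^ 2 * G1 t.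
Let d2 (t : R) : R := - b * q_poly (G2 t) (G3 t) (G1 t) * G0 t ^ 2 * G2 t.
Let d3 (t : R) : R := - b * q_poly (G3 t) (G1 t) (G2 t) * G0 t ^ 2 * G3 t.

Lemma extended_eq t : 0 <= t -> G0 t = g0 t /\ G1 t = g1 t /\ G2 t = g2 t /\ G3 t = g3 t.
Proof. intros Ht. unfold G0, G1, G2, G3. rewrite !extend0_eq by exact Ht. auto. Qed.

Lemma extended_initial : G0 0 = h0 /\ G1 0 = h1 /\ G2 0 = h2 /\ G3 0 = h3.
Proof.
  destruct (extended_eq 0 (Rle_refl 0)) as (-> & -> & -> & ->).
  destruct Hsol as (-> & -> & -> & -> & _). auto.
Qed.

Lemma solution_right_cont0 :
  right_cont0 g0 /\ right_cont0 g1 /\ right_cont0 g2 /\ right_cont0 g3.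
Proof.
  destruct Hsol as (E0 & E1 & E2 & E3 & Hrc & _).
  repeat split; intros eps He; destruct (Hrc eps He) as [d [Hd Hd']]; exists d; split; auto;
    intros t Ht; specialize (Hd' t Ht); [rewrite E0 | rewrite E1 | rewrite E2 | rewrite E3]; tauto.
Qed.

Lemma solution_derivable_pt_lim t : 0 < t ->
  derivable_pt_lim g0 t (d0 t) /\ derivable_pt_lim g1 t (d1 t) /\
  derivable_pt_lim g2 t (d2 t) /\ derivable_pt_lim g3 t (d3 t).
Proof.
  intros Ht. destruct (extended_eq t ltac:(lra)) as (F0 & F1 & F2 & F3).
  unfold d0, d1, d2, d3. rewrite F0, F1, F2, F3.
  destruct Hsol as (_ & _ & _ & _ & _ & Hder). exact (Hder t Ht).
Qed.

Lemma extended_is_deriv_pos :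
  is_deriv_pos G0 d0 /\ is_deriv_pos G1 d1 /\ is_deriv_pos G2 d2 /\ is_deriv_pos G3 d3.
Proof.
  destruct solution_right_cont0 as (R0 & R1 & R2 & R3).
  split; [|split; [|split]]; apply extend0_is_deriv_pos; try assumption;
    intros t Ht; apply (solution_derivable_pt_lim t Ht).
Qed.

Lemma extended_continuity_pt :
  (forall t, continuity_pt G0 t) /\ (forall t, continuity_pt G1 t) /\
  (forall t, continuity_pt G2 t) /\ (forall t, continuity_pt G3 t).
Proof. destruct extended_is_deriv_pos as ([? _] & [? _] & [? _] & [? _]). auto. Qed.

Lemma extended_pos t : 0 < G0 t /\ 0 < G1 t /\ 0 < G2 t /\ 0 < G3 t.
Proof.
  destruct extended_is_deriv_pos as (D0 & D1 & D2 & D3).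
  destruct extended_continuity_pt as (C0 & C1 & C2 & C3).
  destruct extended_initial as (I0 & I1 & I2 & I3).
  assert (Hsign : forall f df Rf, is_deriv_pos f df -> (forall t, continuity_pt Rf t) ->
    (forall t, 0 < t -> df t = f t * Rf t) -> 0 < f 0 -> 0 < f (Rmax 0 t)).
  { intros f df Rf Hf HRf Hlin Hf0. apply (linear_ode_sign f df Rf); auto. apply Rmax_l. }
  unfold G0, G1, G2, G3. rewrite (extend0_Rmax g0), (extend0_Rmax g1),
    (extend0_Rmax g2), (extend0_Rmax g3). fold G0 G1 G2 G3. repeat split.
  - apply (Hsign G0 d0 (fun t => - b * p_poly (G1 t) (G2 t) (G3 t) * G0 t ^ 2)); auto; [| |lra].
    + intros s. unfold p_poly. cont_pt_auto.
    + intros s _. unfold d0. ring.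
  - apply (Hsign G1 d1 (fun t => - b * q_poly (G1 t) (G2 t) (G3 t) * G0 t ^ 2)); auto; [| |lra].
    + intros s. unfold q_poly. cont_pt_auto.
    + intros s _. unfold d1. ring.
  - apply (Hsign G2 d2 (fun t => - b * q_poly (G2 t) (G3 t) (G1 t) * G0 t ^ 2)); auto; [| |lra].
    + intros s. unfold q_poly. cont_pt_auto.
    + intros s _. unfold d2. ring.
  - apply (Hsign G3 d3 (fun t => - b * q_poly (G3 t) (G1 t) (G2 t) * G0 t ^ 2)); auto; [| |lra].
    + intros s. unfold q_poly. cont_pt_auto.
    + intros s _. unfold d3. ring.
Qed.

Lemma extended_det t : 0 <= t -> G0 t * G1 t * G2 t * G3 t = D.
Proof.
  intros Ht. destruct extended_is_deriv_pos as (D0 & D1 & D2 & D3).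
  destruct extended_initial as (I0 & I1 & I2 & I3).
  pose proof (is_deriv_pos_mult _ _ _ _ (is_deriv_pos_mult _ _ _ _
    (is_deriv_pos_mult _ _ _ _ D0 D1) D2) D3) as HP.
  rewrite <- (is_deriv_pos_eq _ _ HP 0 t (conj (Rle_refl 0) Ht)).
  - cbv beta. rewrite I0, I1, I2, I3. reflexivity.
  - intros c _. cbv beta. unfold d0, d1, d2, d3.
    transitivity (- b * G0 c ^ 3 * G1 c * G2 c * G3 c *
      (p_poly (G1 c) (G2 c) (G3 c) + q_poly (G1 c) (G2 c) (G3 c)
       + q_poly (G2 c) (G3 c) (G1 c) + q_poly (G3 c) (G1 c) (G2 c))); [ring|].
    rewrite p_q_poly_sum. ring.
Qed.

Lemma extended_pair_12 : h1 = h2 -> forall t, 0 <= t -> G1 t = G2 t.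
Proof.
  intros E. destruct extended_is_deriv_pos as (_ & D1 & D2 & _).
  destruct extended_continuity_pt as (C0 & _ & _ & C3).
  destruct extended_initial as (_ & I1 & I2 & _).
  apply (S3_pair_eq b G0 G1 G2 G3 d1 d2); auto; [intros; reflexivity .. | congruence].
Qed.

Lemma extended_pair_23 : h2 = h3 -> forall t, 0 <= t -> G2 t = G3 t.
Proof.
  intros E. destruct extended_is_deriv_pos as (_ & _ & D2 & D3).
  destruct extended_continuity_pt as (C0 & C1 & _ & _).
  destruct extended_initial as (_ & _ & I2 & I3).
  apply (S3_pair_eq b G0 G2 G3 G1 d2 d3); auto; [intros; reflexivity .. | congruence].
Qed.

(* [d/dt ((4 D - g0 g2^3) g0^3 g2)] vanishes once [D = g0 g1 g2 g3] and two coordinates agree. *)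
Lemma extended_kappa : (forall t, 0 <= t -> G1 t = G2 t \/ G2 t = G3 t) ->
  forall t, 0 <= t -> (4 * D - G0 t * G2 t ^ 3) * G0 t ^ 3 * G2 t = kappa_of h0 h1 h2 h3.
Proof.
  intros Hsym t Ht. destruct extended_is_deriv_pos as (D0 & _ & D2 & _).
  destruct extended_initial as (I0 & _ & I2 & _).
  pose proof (is_deriv_pos_mult _ _ _ _ (is_deriv_pos_mult _ _ _ _
    (is_deriv_pos_minus _ _ _ _ (is_deriv_pos_const (4 * D))
       (is_deriv_pos_mult _ _ _ _ D0 (is_deriv_pos_pow _ _ D2 3)))
    (is_deriv_pos_pow _ _ D0 3)) D2) as HF.
  rewrite <- (is_deriv_pos_eq _ _ HF 0 t (conj (Rle_refl 0) Ht)).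
  - cbv beta. rewrite I0, I2. reflexivity.
  - intros c Hc. cbv beta. rewrite <- (extended_det c ltac:(lra)).
    unfold d0, d2, p_poly, q_poly. simpl INR. simpl pred.
    destruct (Hsym c ltac:(lra)) as [-> | ->]; ring.
Qed.

Lemma S3_kappa_invariant : h1 = h2 \/ h2 = h3 -> forall t, 0 <= t ->
  (4 * D - g0 t * g2 t ^ 3) * g0 t ^ 3 * g2 t = kappa_of h0 h1 h2 h3.
Proof.
  intros Hsym t Ht. destruct (extended_eq t Ht) as (E0 & _ & E2 & _).
  rewrite <- E0, <- E2. apply extended_kappa; [|exact Ht].
  intros s Hs. destruct Hsym as [E|E];
    [left; apply extended_pair_12 | right; apply extended_pair_23]; assumption.
Qed.

Lemma D_pos : 0 < D.
Proof. unfold D, deth. repeat apply Rmult_lt_0_compat; assumption. Qed.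

Lemma S3_case_AAC : h1 = h2 -> h2 < h3 ->
  S3_converges h0 h1 h2 h3 g0 g1 g2 g3 /\
  incr_on_nonneg g1 /\ incr_on_nonneg g2 /\ decr_on_nonneg g3.
Proof.
  intros E12 E23. pose proof (extended_pair_12 E12) as P12.
  destruct extended_is_deriv_pos as (_ & _ & D2 & D3).
  destruct extended_initial as (_ & _ & I2 & I3).
  destruct (reduced_flow_behaviour b D (kappa_of h0 h1 h2 h3) G0 G2 G3 d2 d3)
    as [(L0 & L2 & L3) [Hmono _]].
  - apply beta_pos; assumption.
  - exact D_pos.
  - rewrite kappa_of_factor, <- E12.
    assert (0 < h1 * (4 * h3 - h1)) by (apply Rmult_lt_0_compat; lra).
    apply Rmult_lt_0_compat; [apply Rmult_lt_0_compat; apply pow_lt|]; nra.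
  - exact D2.
  - exact D3.
  - apply extended_continuity_pt.
  - intros t. destruct (extended_pos t) as (? & _ & ? & ?). auto.
  - intros t Ht. rewrite <- (extended_det t Ht), (P12 t Ht). ring.
  - apply extended_kappa. intros s Hs. left. apply P12, Hs.
  - intros t Ht. unfold d2. rewrite <- (P12 t ltac:(lra)), q_poly_ACA. ring.
  - intros t Ht. unfold d3. rewrite (P12 t ltac:(lra)), q_poly_CAA. ring.
  - destruct (Hmono ltac:(rewrite I2, I3; exact E23)) as [Hinc Hdec].
    assert (E0 : forall t, 0 <= t -> G0 t = g0 t) by apply extended_eq.
    assert (E1 : forall t, 0 <= t -> G2 t = g1 t)
      by (intros t Ht; rewrite <- (P12 t Ht); apply extended_eq, Ht).
    assert (E2 : forall t, 0 <= t -> G2 t = g2 t) by apply extended_eq.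
    assert (E3 : forall t, 0 <= t -> G3 t = g3 t) by apply extended_eq.
    split; [repeat split | repeat split].
    + exact (cv_infty_to_ext _ _ _ L0 E0).
    + exact (cv_infty_to_ext _ _ _ L2 E1).
    + exact (cv_infty_to_ext _ _ _ L2 E2).
    + exact (cv_infty_to_ext _ _ _ L3 E3).
    + exact (incr_on_nonneg_ext _ _ E1 Hinc).
    + exact (incr_on_nonneg_ext _ _ E2 Hinc).
    + exact (decr_on_nonneg_ext _ _ E3 Hdec).
Qed.

Lemma S3_case_CAA : h1 < h2 -> h2 = h3 -> h3 < 4 * h1 ->
  S3_converges h0 h1 h2 h3 g0 g1 g2 g3 /\ incr_on_nonneg g1.
Proof.
  intros E12 E23 E34. pose proof (extended_pair_23 E23) as P23.
  destruct extended_is_deriv_pos as (_ & D1 & D2 & _).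
  destruct extended_initial as (_ & I1 & I2 & _).
  destruct (reduced_flow_behaviour b D (kappa_of h0 h1 h2 h3) G0 G2 G1 d2 d1)
    as [(L0 & L2 & L1) [_ Hmono]].
  - apply beta_pos; assumption.
  - exact D_pos.
  - rewrite kappa_of_factor, <- E23.
    assert (0 < h2 * (4 * h1 - h2)) by (apply Rmult_lt_0_compat; lra).
    apply Rmult_lt_0_compat; [apply Rmult_lt_0_compat; apply pow_lt|]; nra.
  - exact D2.
  - exact D1.
  - apply extended_continuity_pt.
  - intros t. destruct (extended_pos t) as (? & ? & ? & _). auto.
  - intros t Ht. rewrite <- (extended_det t Ht), <- (P23 t Ht). ring.
  - apply extended_kappa. intros s Hs. right. apply P23, Hs.
  - intros t Ht. unfold d2. rewrite <- (P23 t ltac:(lra)), q_poly_AAC. ring.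
  - intros t Ht. unfold d1. rewrite <- (P23 t ltac:(lra)), q_poly_CAA. ring.
  - assert (E0 : forall t, 0 <= t -> G0 t = g0 t) by apply extended_eq.
    assert (E1 : forall t, 0 <= t -> G1 t = g1 t) by apply extended_eq.
    assert (E2 : forall t, 0 <= t -> G2 t = g2 t) by apply extended_eq.
    assert (E3 : forall t, 0 <= t -> G2 t = g3 t)
      by (intros t Ht; rewrite (P23 t Ht); apply extended_eq, Ht).
    split; [repeat split|].
    + exact (cv_infty_to_ext _ _ _ L0 E0).
    + exact (cv_infty_to_ext _ _ _ L1 E1).
    + exact (cv_infty_to_ext _ _ _ L2 E2).
    + exact (cv_infty_to_ext _ _ _ L2 E3).
    + apply (incr_on_nonneg_ext _ _ E1), Hmono. rewrite I1, I2. exact E12.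
Qed.

End S3Solution.

Theorem theorem5p17 (h0 h1 h2 h3 : R) :
  0 < h0 -> 0 < h1 -> 0 < h2 -> 0 < h3 ->
  ((h1 = h2 /\ h2 < h3) \/ (h1 < h2 /\ h2 = h3 /\ h3 < 4 * h1)) ->
  let D := deth h0 h1 h2 h3 in
  let kappa := (4 * D - h0 * h2^3) * h0^3 * h2 in
  (exists g0 g1 g2 g3 : R -> R, solves_S3_global h0 h1 h2 h3 g0 g1 g2 g3) /\
  (forall g0 g1 g2 g3 : R -> R, solves_S3_global h0 h1 h2 h3 g0 g1 g2 g3 ->
     (forall t, 0 <= t -> (4 * D - g0 t * (g2 t)^3) * (g0 t)^3 * g2 t = kappa) /\
     cv_infty_to g0 (Rpower (kappa / 3) (3/8) * Rpower D (-(1/2))) /\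
     cv_infty_to g1 (Rpower (3 / kappa) (1/8) * Rpower D (1/2)) /\
     cv_infty_to g2 (Rpower (3 / kappa) (1/8) * Rpower D (1/2)) /\
     cv_infty_to g3 (Rpower (3 / kappa) (1/8) * Rpower D (1/2)) /\
     (h1 = h2 -> incr_on_nonneg g1 /\ incr_on_nonneg g2 /\ decr_on_nonneg g3) /\
     (h2 = h3 -> incr_on_nonneg g1)).
Proof.
  intros H0 H1 H2 H3 Hcase D kappa. split.
  - destruct Hcase as [[<- E23] | [E12 [<- E34]]].
    + apply S3_existence_AAC; lra.
    + apply S3_existence_CAA; lra.
  - intros g0 g1 g2 g3 Hsol.
    assert (Hinv : h1 = h2 \/ h2 = h3) by (destruct Hcase; [left | right]; tauto).
    split; [exact (S3_kappa_invariant _ _ _ _ _ _ _ _ Hsol Hinv)|].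
    destruct Hcase as [[E12 E23] | [E12 [E23 E34]]].
    + destruct (S3_case_AAC _ _ _ _ _ _ _ _ H0 H1 H2 H3 Hsol E12 E23)
        as [(L0 & L1 & L2 & L3) Hmono].
      do 4 (split; [assumption|]). split; [intros _; exact Hmono | intros E; lra].
    + destruct (S3_case_CAA _ _ _ _ _ _ _ _ H0 H1 H2 H3 Hsol E12 E23 E34)
        as [(L0 & L1 & L2 & L3) Hmono].
      do 4 (split; [assumption|]). split; [intros E; lra | intros _; exact Hmono].
Qed.
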